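(* Let $x_0\in X$ be a regular point. For every $p$-harmonic function $u\ge0$ on $\mathcal T(x_0)$ there exists a unique additive function $\nu$ on $\mathcal T(x_0)$ such that $$u(x)=\frac{1}{W^{(n(x))}(x)}\,\nu(x),\qquad x\in\mathcal T(x_0).$$ Conversely, if $\nu$ is an additive function on $\mathcal T(x_0)$ and $u$ is defined by this formula, then $u$ is $p$-harmonic.
   Context: $X$ is a compact metric space, $r:X\to X$ a finite-to-one, onto, Borel map, $m_0$ a Borel function with $\frac{1}{\#r^{-1}(x)}\sum_{r(y)=x}|m_0(y)|^2=1$, and $W(x)=|m_0(x)|^2/\#r^{-1}(r(x))$. A point $x_0$ is regular if the sets $r^{-n}(x_0)$, $n\in\mathbb N$, are mutually disjoint and no $r^{-n}(x_0)$, $n\ge0$, meets the zero set of $W$. $\mathcal T(x_0)=\bigcup_{n\ge0}r^{-n}(x_0)$; $n(x)$ is the unique $n\ge0$ with $r^n(x)=x_0$. $W^{(n)}(x)=W(x)W(r(x))\cdots W(r^{n-1}(x))$ (equal to $1$ for $n=0$). A function $u$ on $\mathcal T(x_0)$ is $p$-harmonic if $u(x)=\sum_{r(y)=x}W(y)u(y)$ for all $x\in\mathcal T(x_0)$. A non-negative function $\nu$ on $\mathcal T(x_0)$ is additive if $\nu(x)=\sum_{r(y)=x}\nu(y)$ for all $x\in\mathcal T(x_0)$. *)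

From HB Require Import structures.
From mathcomp Require Import all_boot all_order all_algebra finmap.
From mathcomp Require Import all_classical all_reals all_analysis.
From mathcomp Require Import complex.
Set Implicit Arguments.
Unset Strict Implicit.
Unset Printing Implicit Defensive.
Import Order.TTheory GRing.Theory Num.Theory numFieldTopology.Exports.
Local Open Scope classical_set_scope.
Local Open Scope ring_scope.

Definition borel_fun (T U : topologicalType) (f : T -> U) : Prop :=
  forall B : set U, <<s open >> B -> <<s open >> (f @^-1` B).

Section Defs.
Variables (R : realType) (X : choiceType).

Definition fib (r : X -> X) (x : X) : set X := r @^-1` [set x].

Definition nfib (r : X -> X) (x : X) : R := (#|` fset_set (fib r x) |)%:R.

Definition sqmod (z : R[i]) : R := (complex.Re z) ^+ 2 + (complex.Im z) ^+ 2.

Definition W (r : X -> X) (m0 : X -> R[i]) (x : X) : R :=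
  sqmod (m0 x) / nfib r (r x).

Definition Wn (r : X -> X) (m0 : X -> R[i]) (n : nat) (x : X) : R :=
  \prod_(k < n) W r m0 (iter k r x).

Definition preim_n (r : X -> X) (n : nat) (x0 : X) : set X :=
  [set x | iter n r x = x0].

Definition regular (r : X -> X) (m0 : X -> R[i]) (x0 : X) : Prop :=
  (forall n m : nat, n <> m -> preim_n r n x0 `&` preim_n r m x0 = set0) /\
  (forall n : nat, preim_n r n x0 `&` [set x | W r m0 x = 0] = set0).

Definition tree (r : X -> X) (x0 : X) : set X :=
  \bigcup_(n in [set: nat]) preim_n r n x0.

(* n(x): the (unique, for regular x0) n >= 0 with r^n(x) = x0 *)
Definition level (r : X -> X) (x0 : X) (x : X) : nat :=
  xget 0%N [set n : nat | iter n r x = x0].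

Definition p_harmonic (r : X -> X) (m0 : X -> R[i]) (x0 : X) (u : X -> R) :
  Prop :=
  forall x, tree r x0 x -> u x = \sum_(y \in fib r x) W r m0 y * u y.

Definition additive_on (r : X -> X) (x0 : X) (nu : X -> R) : Prop :=
  (forall x, tree r x0 x -> 0 <= nu x) /\
  (forall x, tree r x0 x -> nu x = \sum_(y \in fib r x) nu y).

End Defs.

From HB Require Import structures.
From mathcomp Require Import all_boot all_order all_algebra finmap.
From mathcomp Require Import all_classical all_reals all_analysis.
From mathcomp Require Import complex.
Import Order.TTheory GRing.Theory Num.Theory numFieldTopology.Exports.
Local Open Scope classical_set_scope.
Local Open Scope ring_scope.

(* Regularity makes the level n(x) well defined and the weight
   w(x) = W^(n(x))(x) nonzero on the tree; for y in r^{-1}(x) one has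
   n(y) = n(x) + 1, hence w(y) = W(y) w(x). Multiplying the harmonicity
   equation at x by w(x) therefore turns it into the additivity equation for
   w u, and u |-> w u is a bijection since w does not vanish. *)

Section RegularTree.
Local Set Implicit Arguments.
Local Unset Strict Implicit.
Variables (R : realType) (X : choiceType) (r : X -> X) (m0 : X -> R[i]) (x0 : X).

Lemma W_ge0 x : 0 <= W r m0 x.
Proof. by rewrite divr_ge0 ?addr_ge0 ?sqr_ge0. Qed.

Lemma Wn_ge0 n x : 0 <= Wn r m0 n x.
Proof. by apply: prodr_ge0 => k _; apply: W_ge0. Qed.

Lemma WnS n x : Wn r m0 n.+1 x = W r m0 x * Wn r m0 n (r x).
Proof.
rewrite /Wn big_ord_recl; congr (_ * _).
by apply: eq_bigr => k _; rewrite -iterSr.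
Qed.

Hypothesis reg : regular r m0 x0.

Lemma level_eq x n : iter n r x = x0 -> level r x0 x = n.
Proof.
move=> xn; apply: xget_unique => // m xm.
case: (eqVneq m n) => [// | /eqP mn].
by have := reg.1 m n mn; rewrite -subset0 => /(_ x); case.
Qed.

Lemma iter_level x : tree r x0 x -> iter (level r x0 x) r x = x0.
Proof. by case=> n _ xn; rewrite (level_eq xn). Qed.

Lemma tree_fib x y : tree r x0 x -> r y = x ->
  tree r x0 y /\ level r x0 y = (level r x0 x).+1.
Proof.
move=> tx ryx; have yn : iter (level r x0 x).+1 r y = x0.
  by rewrite iterSr ryx iter_level.
by split; [exists (level r x0 x).+1 | exact: level_eq].
Qed.

Lemma W_neq0 x : tree r x0 x -> W r m0 x != 0.
Proof.
case=> n _ xn; apply/eqP => Wx0.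
by have := reg.2 n; rewrite -subset0 => /(_ x); apply.
Qed.

Lemma Wn_neq0 n x : tree r x0 x -> iter n r x = x0 -> Wn r m0 n x != 0.
Proof.
elim: n x => [|n IHn] x tx xn; first by rewrite /Wn big_ord0 oner_neq0.
rewrite WnS mulf_neq0 ?W_neq0 // IHn -?iterSr //.
by exists n => //; rewrite /preim_n /= -iterSr.
Qed.

Let weight x := Wn r m0 (level r x0 x) x.

Lemma weight_neq0 x : tree r x0 x -> weight x != 0.
Proof. by move=> tx; rewrite Wn_neq0 ?iter_level. Qed.

Lemma weight_fib x y : tree r x0 x -> r y = x ->
  weight y = W r m0 y * weight x.
Proof. by move=> tx ryx; rewrite /weight (tree_fib tx ryx).2 WnS ryx. Qed.

Hypothesis fin_fib : forall x, finite_set (fib r x).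

Lemma sum_weight_fib (u : X -> R) x : tree r x0 x ->
  \sum_(y \in fib r x) weight y * u y =
  weight x * \sum_(y \in fib r x) W r m0 y * u y.
Proof.
move=> tx; rewrite fsbig_distrr //; apply: eq_fsbigr => y.
by rewrite inE => ryx; rewrite (weight_fib tx ryx) /= mulrCA mulrA.
Qed.

Lemma p_harmonicE (u : X -> R) : p_harmonic r m0 x0 u <->
  forall x, tree r x0 x ->
    weight x * u x = \sum_(y \in fib r x) weight y * u y.
Proof.
split=> hu x tx; first by rewrite sum_weight_fib // -hu.
by apply: (mulfI (weight_neq0 tx)); rewrite hu // sum_weight_fib.
Qed.

End RegularTree.

Theorem corollary4p7 (R : realType) (X : metricType R)
  (r : X -> X) (m0 : X -> R[i]) (x0 : X) :
  compact [set: X] ->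
  (forall x : X, finite_set (fib r x)) ->
  (forall x : X, exists y : X, r y = x) ->
  borel_fun r ->
  @borel_fun X R^o (fun x => complex.Re (m0 x)) ->
  @borel_fun X R^o (fun x => complex.Im (m0 x)) ->
  (forall x : X,
     (nfib R r x)^-1 * (\sum_(y \in fib r x) sqmod (m0 y)) = 1) ->
  regular r m0 x0 ->
  (forall u : X -> R,
     (forall x, tree r x0 x -> 0 <= u x) ->
     p_harmonic r m0 x0 u ->
     exists nu : X -> R,
       [/\ additive_on r x0 nu,
           (forall x, tree r x0 x ->
              u x = (Wn r m0 (level r x0 x) x)^-1 * nu x) &
           (forall nu' : X -> R, additive_on r x0 nu' ->
              (forall x, tree r x0 x ->
                 u x = (Wn r m0 (level r x0 x) x)^-1 * nu' x) ->
              forall x, tree r x0 x -> nu' x = nu x)]) /\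
  (forall nu u : X -> R,
     additive_on r x0 nu ->
     (forall x, tree r x0 x ->
        u x = (Wn r m0 (level r x0 x) x)^-1 * nu x) ->
     p_harmonic r m0 x0 u).
Proof.
move=> _ fin_fib _ _ _ _ _ reg.
have weight_neq0 := weight_neq0 reg.
split=> [u u_ge0 hu | nu u [_ nu_add] u_nu].
- exists (fun x => Wn r m0 (level r x0 x) x * u x); split.
  + split=> x tx; first by rewrite mulr_ge0 ?Wn_ge0 ?u_ge0.
    exact: (p_harmonicE reg fin_fib u).1.
  + by move=> x tx; rewrite mulKf ?weight_neq0.
  + by move=> nu' _ u_nu' x tx; rewrite u_nu' // mulVKf ?weight_neq0.
- have nuE x : tree r x0 x -> Wn r m0 (level r x0 x) x * u x = nu x.
    by move=> tx; rewrite u_nu // mulVKf ?weight_neq0.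
  apply/(p_harmonicE reg fin_fib) => x tx; rewrite nuE // nu_add //.
  apply: eq_fsbigr => y; rewrite inE => ryx.
  by have [ty _] := tree_fib reg tx ryx; rewrite nuE.
Qed.
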